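(* Let $(X,d)$ be an ultrametric space, i.e. $d(x,y)\le\max(d(x,z),d(y,z))$ for all $x,y,z\in X$. Then every slowly oscillating function $f:X\to\mathbb R$ is glacially oscillating.
   Context: A function $g:X\to\mathbb R$ on a metric space is slowly oscillating if for all $r,\epsilon>0$ there is a bounded $K\subset X$ such that $x,y\in X\setminus K$ and $d(x,y)<r$ imply $|g(x)-g(y)|<\epsilon$. A glacial scale on a metric space $X$ is a sequence $\mathcal S=\{(K_i,n_i)\}_{i\ge1}$ of pairs, each $K_i$ a bounded subset of $X$ and $n_i$ a natural number, such that for every bounded $K\subset X$ and every $r>0$ there is $i$ with $K\subset K_i$ and $n_i>r$. An $\mathcal S$-chain is a finite sequence $x_1,\dots,x_n$ of points of $X$ such that for each $i\le n-1$ there is $m\ge1$ with $x_i,x_{i+1}\notin K_m$ and $d(x_i,x_{i+1})\le n_m$. A function $f:X\to\mathbb R$ is glacially oscillating if for every $\epsilon>0$ there is a glacial scale $\mathcal S$ such that $|f(x_1)-f(x_n)|<\epsilon$ for every $\mathcal S$-chain $x_1,\dots,x_n$. *)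

From Stdlib Require Export Reals.
Open Scope R_scope.

Definition is_metric {X : Type} (d : X -> X -> R) : Prop :=
  (forall x y, 0 <= d x y) /\
  (forall x y, d x y = 0 <-> x = y) /\
  (forall x y, d x y = d y x) /\
  (forall x y z, d x z <= d x y + d y z).

Definition is_ultrametric {X : Type} (d : X -> X -> R) : Prop :=
  forall x y z, d x y <= Rmax (d x z) (d y z).

(* Subsets of X are predicates X -> Prop. A set is bounded if it has finite
   diameter (this makes the empty set bounded). *)
Definition bounded {X : Type} (d : X -> X -> R) (K : X -> Prop) : Prop :=
  exists r : R, forall x y, K x -> K y -> d x y <= r.

Definition slowly_oscillating {X : Type} (d : X -> X -> R) (g : X -> R) : Prop :=
  forall r eps : R, 0 < r -> 0 < eps ->
    exists K : X -> Prop, bounded d K /\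
      forall x y, ~ K x -> ~ K y -> d x y < r -> Rabs (g x - g y) < eps.

(* A glacial scale {(K_i, n_i)}_{i>=1}, indexed here by i : nat starting at 0. *)
Definition glacial_scale {X : Type} (d : X -> X -> R)
  (Ks : nat -> (X -> Prop)) (ns : nat -> nat) : Prop :=
  (forall i, bounded d (Ks i)) /\
  (forall K : X -> Prop, bounded d K -> forall r : R, 0 < r ->
     exists i, (forall x, K x -> Ks i x) /\ r < INR (ns i)).

Definition scale_step {X : Type} (d : X -> X -> R)
  (Ks : nat -> (X -> Prop)) (ns : nat -> nat) (a b : X) : Prop :=
  exists m, ~ Ks m a /\ ~ Ks m b /\ d a b <= INR (ns m).

(* An S-chain x_0, ..., x_n (n+1 points, n >= 0). *)
Definition scale_chain {X : Type} (d : X -> X -> R)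
  (Ks : nat -> (X -> Prop)) (ns : nat -> nat) (x : nat -> X) (n : nat) : Prop :=
  forall i, (i < n)%nat -> scale_step d Ks ns (x i) (x (S i)).

Definition glacially_oscillating {X : Type} (d : X -> X -> R) (f : X -> R) : Prop :=
  forall eps : R, 0 < eps ->
    exists (Ks : nat -> (X -> Prop)) (ns : nat -> nat),
      glacial_scale d Ks ns /\
      forall (x : nat -> X) (n : nat), scale_chain d Ks ns x n ->
        Rabs (f (x O) - f (x n)) < eps.

From Stdlib Require Import Lra Lia Classical ClassicalEpsilon.
Open Scope R_scope.

(* Fix a base point p (an empty space is trivially glacially
   oscillating) and eps > 0.  Slow oscillation with r = i + 1 yields radii
   R_i >= i such that points outside the ball B(p, R_i) at distance <= i have
   f-values within eps.  The glacial scale is K_i = B(p, R_i), n_i = i.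

   The ultrametric inequality makes every admissible step a -> b of this scale
   "isosceles": since d(a,b) <= n_m <= R_m < d(p,a), we get d(p,b) = d(p,a).
   Consequently admissible steps compose: two steps a -> b -> c can be replaced
   by one step a -> c, using the larger of the two indices.  Hence the
   endpoints of any chain are related by a single admissible step, and a single
   step moves f by less than eps by the choice of R_m. *)

Lemma transitive_chain {X : Type} (rel : X -> X -> Prop)
  (rel_trans : forall a b c, rel a b -> rel b c -> rel a c)
  (x : nat -> X) (n : nat) :
  (forall i, (i < n)%nat -> rel (x i) (x (S i))) -> (0 < n)%nat ->
  rel (x O) (x n).
Proof.
  intros chain n_pos; induction n as [|n IH]; [lia|].
  destruct n as [|n]; [now apply chain|].
  apply rel_trans with (x (S n)); [apply IH; auto; lia | apply chain; lia].
Qed.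

Lemma nat_above (A : R) : exists n : nat, A < INR n.
Proof. destruct (INR_archimed 1 A) as [n Hn]; [lra|]. exists n; lra. Qed.

Section UltrametricSpace.

Variables (X : Type) (d : X -> X -> R).
Hypothesis metric : is_metric d.

Lemma bounded_in_ball (K : X -> Prop) (p : X) :
  bounded d K -> exists R, forall x, K x -> d p x <= R.
Proof.
  destruct metric as [_ [_ [_ tri]]]. intros [D HD].
  destruct (classic (exists q, K q)) as [[q Kq]|no_point].
  - exists (d p q + D). intros x Kx.
    pose proof (HD q x Kq Kx). pose proof (tri p q x). lra.
  - exists 0. intros x Kx. exfalso; eauto.
Qed.

Lemma ball_bounded (p : X) (R : R) : bounded d (fun x => d p x <= R).
Proof.
  destruct metric as [_ [_ [sym tri]]].
  exists (2 * R). intros x y Hx Hy.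
  pose proof (tri x p y). rewrite (sym x p) in *. lra.
Qed.

Hypothesis ultra : is_ultrametric d.

Lemma ultra_isosceles (p a b : X) : d a b < d p a -> d p b = d p a.
Proof.
  destruct metric as [_ [_ [sym _]]]. intros Hab.
  pose proof (ultra p b a) as H1. pose proof (ultra p a b) as H2.
  rewrite (sym b a) in H1. unfold Rmax in *.
  destruct (Rle_dec (d p a) (d a b)); destruct (Rle_dec (d p b) (d a b)); lra.
Qed.

Variables (f : X -> R) (p : X) (eps : R).

Lemma far_radius :
  slowly_oscillating d f -> 0 < eps -> forall i : nat,
  exists R, INR i <= R /\ forall x y, R < d p x -> R < d p y ->
    d x y <= INR i -> Rabs (f x - f y) < eps.
Proof.
  intros so eps_pos i.
  destruct (so (INR i + 1) eps) as [K [K_bnd K_osc]];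
    [pose proof (pos_INR i); lra | exact eps_pos |].
  destruct (bounded_in_ball K p K_bnd) as [R0 HR0].
  exists (Rmax (INR i) R0). split; [apply Rmax_l|].
  pose proof (Rmax_r (INR i) R0).
  intros x y Hx Hy Hxy. apply K_osc; [intros Kx | intros Ky | lra].
  - pose proof (HR0 x Kx); lra.
  - pose proof (HR0 y Ky); lra.
Qed.

Variable Rf : nat -> R.
Hypothesis Rf_ge : forall i, INR i <= Rf i.

Let ball_scale (i : nat) (x : X) : Prop := d p x <= Rf i.

Lemma ball_scale_glacial : glacial_scale d ball_scale (fun i => i).
Proof.
  split; [intros i; apply ball_bounded|].
  intros K K_bnd r r_pos.
  destruct (bounded_in_ball K p K_bnd) as [R0 HR0].
  destruct (nat_above (Rmax r R0)) as [n Hn]. exists n.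
  pose proof (Rmax_l r R0). pose proof (Rmax_r r R0). pose proof (Rf_ge n).
  split; [intros x Kx; pose proof (HR0 x Kx); unfold ball_scale|]; lra.
Qed.

(* Admissible steps of the ball scale compose, by the isosceles property and
   the ultrametric inequality. *)
Lemma ball_step_trans (a b c : X) :
  scale_step d ball_scale (fun i => i) a b ->
  scale_step d ball_scale (fun i => i) b c ->
  scale_step d ball_scale (fun i => i) a c.
Proof.
  destruct metric as [_ [_ [sym _]]]. unfold ball_scale.
  intros [m [Ha [Hb Hab]]] [m' [Hb' [Hc Hbc]]].
  apply Rnot_le_lt in Ha, Hb, Hb', Hc.
  pose proof (Rf_ge m). pose proof (Rf_ge m').
  assert (pa_pb : d p a = d p b).
  { apply ultra_isosceles. rewrite sym. lra. }
  assert (pc_pb : d p c = d p b) by (apply ultra_isosceles; lra).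
  assert (ac_le : d a c <= Rmax (d a b) (d b c)).
  { pose proof (ultra a c b) as Hu. rewrite (sym c b) in Hu. exact Hu. }
  unfold Rmax in ac_le.
  destruct (Rle_dec (INR m) (INR m')); [exists m' | exists m];
    (split; [|split]); try (apply Rlt_not_le; lra);
    destruct (Rle_dec (d a b) (d b c)); lra.
Qed.

Lemma ball_chain_small
  (Rf_osc : forall i x y, Rf i < d p x -> Rf i < d p y ->
     d x y <= INR i -> Rabs (f x - f y) < eps)
  (eps_pos : 0 < eps) (x : nat -> X) (n : nat) :
  scale_chain d ball_scale (fun i => i) x n -> Rabs (f (x O) - f (x n)) < eps.
Proof.
  intros chain. destruct n as [|n].
  - unfold Rminus. rewrite Rplus_opp_r, Rabs_R0. exact eps_pos.
  - destruct (transitive_chain _ ball_step_trans x (S n) chain ltac:(lia))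
      as [m [H0 [Hn Hdist]]].
    apply Rnot_le_lt in H0, Hn. now apply Rf_osc with m.
Qed.

End UltrametricSpace.

Lemma glacially_oscillating_empty (X : Type) (d : X -> X -> R) (f : X -> R) :
  ~ inhabited X -> glacially_oscillating d f.
Proof.
  intros empty eps _. exists (fun _ _ => False), (fun i => i). split; [split|].
  - intros i. exists 0. intros x y [].
  - intros K _ r _. destruct (nat_above r) as [n Hn]. exists n.
    split; [intros x _; exfalso; exact (empty (inhabits x)) | exact Hn].
  - intros x n _. exfalso. exact (empty (inhabits (x O))).
Qed.

Theorem proposition3p4 (X : Type) (d : X -> X -> R)
  (hmet : is_metric d) (hultra : is_ultrametric d) (f : X -> R) :
  slowly_oscillating d f -> glacially_oscillating d f.
Proof.
  intros so.
  destruct (classic (inhabited X)) as [[p]|empty];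
    [|now apply glacially_oscillating_empty].
  intros eps eps_pos.
  destruct (choice _ (far_radius X d hmet f p eps so eps_pos)) as [Rf HRf].
  exists (fun i x => d p x <= Rf i), (fun i => i). split.
  - apply ball_scale_glacial; [exact hmet | intros i; apply HRf].
  - apply ball_chain_small; auto; intros i; apply HRf.
Qed.
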